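(* Let $a,b\in\mathbb{C}$ with $b\neq0$, and suppose $\cdot_\lambda\cdot$ is a compatible left-symmetric conformal algebraic structure on $\mathcal{W}(a,b)=\mathbb{C}[\partial]L\oplus\mathbb{C}[\partial]W$ such that $\mathbb{C}[\partial]L$ is a left-symmetric conformal subalgebra. Let $c\in\mathbb{C}$ with $L_\lambda L=(\partial+\lambda+c)L$, and write $L_\lambda W=g_1L+g_2W$, $W_\lambda L=h_1L+h_2W$, $W_\lambda W=k_1L+k_2W$ with $g_i,h_i,k_i\in\mathbb{C}[\lambda,\partial]$. Assume $g_2(\lambda,\partial)=\partial+(a-1)\lambda+b+c$ and $h_2(\lambda,\partial)=\partial+\lambda+c$. Then $h_1=g_1=k_1=k_2=0$.
   Context: A conformal algebra is a $\mathbb{C}[\partial]$-module $R$ with a $\mathbb{C}$-bilinear map $R\times R\to R[\lambda]$, $(x,y)\mapsto x_\lambda y$, satisfying $(\partial x)_\lambda y=-\lambda\, x_\lambda y$ and $x_\lambda(\partial y)=(\partial+\lambda)\,x_\lambda y$. For $x,y\in R$, $y_{-\lambda-\partial}x$ means: write $y_\mu x=\sum_j \mu^j z_j$ and set $y_{-\lambda-\partial}x=\sum_j(-\lambda-\partial)^j z_j$. A left-symmetric conformal algebra is a conformal algebra with $(x_\lambda y)_{\lambda+\mu}z-x_\lambda(y_\mu z)=(y_\mu x)_{\lambda+\mu}z-y_\mu(x_\lambda z)$. A compatible left-symmetric conformal algebraic structure on a Lie conformal algebra $(R,[\cdot_\lambda\cdot])$ is a left-symmetric conformal product on the same $\mathbb{C}[\partial]$-module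 with $x_\lambda y-y_{-\lambda-\partial}x=[x_\lambda y]$ for all $x,y$. $\mathcal{W}(a,b)$ is the free $\mathbb{C}[\partial]$-module with basis $L,W$ and Lie conformal brackets $[L_\lambda L]=(\partial+2\lambda)L$, $[L_\lambda W]=(\partial+a\lambda+b)W$, $[W_\lambda W]=0$. ''$\mathbb{C}[\partial]L$ is a left-symmetric conformal subalgebra'' means $L_\lambda L\in(\mathbb{C}[\partial]L)[\lambda]$; in that case $L_\lambda L=(\partial+\lambda+c)L$ for some $c\in\mathbb{C}$. *)

From HB Require Import structures.
From mathcomp Require Import all_boot all_order all_algebra.
From mathcomp Require Import reals complex.
From mathcomp Require Import mpoly.

Set Implicit Arguments.
Unset Strict Implicit.
Unset Printing Implicit Defensive.

Import Order.TTheory GRing.Theory Num.Theory.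
Local Open Scope ring_scope.

Definition Cplx (R : realType) : Type := R[i].

Inductive basis := bL | bW.

(* Polynomials in (lambda, partial): lambda = 'X_0, partial = 'X_1. *)
Notation P2 R := {mpoly (Cplx R)[2]}.
(* Polynomials in (lambda, mu, partial): lambda = 'X_0, mu = 'X_1, partial = 'X_2. *)
Notation P3 R := {mpoly (Cplx R)[3]}.

(* A lambda-product (equivalently a Lie lambda-bracket) on the free
   C[partial]-module with basis {L, W} is determined, by sesquilinearity,
   by its values on basis elements:  e_i _lambda e_j = sum_k f i j k (lambda, partial) e_k.
   [f i j k] is the coefficient of e_k in  e_i _lambda e_j. *)
Definition lprod (R : realType) := basis -> basis -> basis -> P2 R.

Definition sumb (T : zmodType) (F : basis -> T) : T := F bL + F bW.

Section Ops.
Variable R : realType.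

(* f(-lambda-partial, partial) : computes y_{-lambda-partial} x from y_lambda x. *)
Definition flip (f : P2 R) : P2 R := f \mPo [tuple - 'X_0 - 'X_1; 'X_1].

Definition sub_l_mlm (f : P2 R) : P3 R := f \mPo [tuple 'X_0; - 'X_0 - 'X_1].
Definition sub_m_mlm (f : P2 R) : P3 R := f \mPo [tuple 'X_1; - 'X_0 - 'X_1].
Definition sub_lm_d (f : P2 R) : P3 R := f \mPo [tuple 'X_0 + 'X_1; 'X_2].
Definition sub_l_d (f : P2 R) : P3 R := f \mPo [tuple 'X_0; 'X_2].
Definition sub_m_d (f : P2 R) : P3 R := f \mPo [tuple 'X_1; 'X_2].
Definition sub_m_dl (f : P2 R) : P3 R := f \mPo [tuple 'X_1; 'X_2 + 'X_0].
Definition sub_l_dm (f : P2 R) : P3 R := f \mPo [tuple 'X_0; 'X_2 + 'X_1].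

(* Coefficient of e in (x_lambda y)_{lambda+mu} z, using
   (g(lambda,partial) e_j)_{nu} z = g(lambda,-nu) (e_j)_nu z. *)
Definition assoc1 (f : lprod R) (x y z e : basis) : P3 R :=
  sumb (fun j => sub_l_mlm (f x y j) * sub_lm_d (f j z e)).
(* Coefficient of e in x_lambda (y_mu z), using
   x_lambda (g(mu,partial) e_j) = g(mu, partial+lambda) x_lambda e_j. *)
Definition assoc2 (f : lprod R) (x y z e : basis) : P3 R :=
  sumb (fun j => sub_m_dl (f y z j) * sub_l_d (f x j e)).
(* Coefficient of e in (y_mu x)_{lambda+mu} z *)
Definition assoc1' (f : lprod R) (x y z e : basis) : P3 R :=
  sumb (fun j => sub_m_mlm (f y x j) * sub_lm_d (f j z e)).
(* Coefficient of e in y_mu (x_lambda z) *)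
Definition assoc2' (f : lprod R) (x y z e : basis) : P3 R :=
  sumb (fun j => sub_l_dm (f x z j) * sub_m_d (f y j e)).

(* Left-symmetry:
   (x_l y)_{l+m} z - x_l (y_m z) = (y_m x)_{l+m} z - y_m (x_l z).
   By sesquilinearity it suffices (and is equivalent) to impose it on basis elements. *)
Definition left_symmetric (f : lprod R) : Prop :=
  forall x y z e : basis,
    assoc1 f x y z e - assoc2 f x y z e = assoc1' f x y z e - assoc2' f x y z e.

(* Lie conformal algebra W(a,b):
   [L_l L] = (partial + 2 lambda) L, [L_l W] = (partial + a lambda + b) W,
   [W_l W] = 0, and [W_l L] = - [L_{-l-partial} W] by skew-symmetry. *)
Definition Wab_LW (a b : Cplx R) (e : basis) : P2 R :=
  match e with bL => 0 | bW => 'X_1 + a *: 'X_0 + b%:MP end.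

Definition Wab (a b : Cplx R) : lprod R :=
  fun x y e =>
    match x, y, e with
    | bL, bL, bL => 'X_1 + 2%:R *: 'X_0
    | bL, bL, bW => 0
    | bL, bW, e => Wab_LW a b e
    | bW, bL, e => - flip (Wab_LW a b e)
    | bW, bW, _ => 0
    end.

(* Compatibility:  x_lambda y - y_{-lambda-partial} x = [x_lambda y]
   (again equivalent to its restriction to basis elements). *)
Definition compatible (br f : lprod R) : Prop :=
  forall x y e : basis, f x y e - flip (f y x e) = br x y e.

End Ops.

From Pilot Require Import Defs.
From HB Require Import structures.
From mathcomp Require Import all_boot all_order all_algebra.
From mathcomp Require Import reals complex.
From mathcomp Require Import mpoly.
From mathcomp Require Import ring.
Import GRing.Theory.
Local Open Scope ring_scope.

(* Put λ = 0 in the left-symmetry identity for (x, y) = (L, W) and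
   (z, coefficient) = (L, L), (W, W), (W, L):
     b h1 = (∂ + λ + c) g1(0, ∂),      b k2 = - (∂ + λ + c) g1(0, ∂ + λ),
     2b k1 = k2 g1(0, ∂) - g1(0, ∂ + λ) h1.
   Compatibility says g1(λ, ∂) = h1(-λ-∂, ∂) and k2(λ, ∂) = k2(-λ-∂, ∂);
   substituting λ := -λ-∂ in the second identity yields
   (∂ + λ + c) g1(0, ∂ + λ) = (c - λ) g1(0, -λ), and then λ := c shows that
   g1(0, .) = 0.  As b != 0 this forces h1 = k2 = 0, hence g1 = 0 and
   finally k1 = 0. *)

Section CompMpoly.
Variable C : comNzRingType.

Lemma comp_mpolyA n k l (p : {mpoly C[n]}) (t : n.-tuple {mpoly C[k]})
    (s : k.-tuple {mpoly C[l]}) :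
  (p \mPo t) \mPo s = p \mPo [tuple tnth t i \mPo s | i < n].
Proof.
rewrite [p \mPo t]comp_mpolyE [p \mPo _]comp_mpolyE raddf_sum /=.
apply: eq_bigr => m _; rewrite comp_mpolyZ rmorph_prod; congr (_ *: _).
by apply: eq_bigr => i _; rewrite rmorphXn tnth_mktuple.
Qed.

Lemma comp_mpoly2A k l (p : {mpoly C[2]}) (u v : {mpoly C[k]})
    (s : k.-tuple {mpoly C[l]}) :
  (p \mPo [tuple u; v]) \mPo s = p \mPo [tuple u \mPo s; v \mPo s].
Proof.
rewrite comp_mpolyA; congr comp_mpoly; apply: eq_from_tnth => i.
by rewrite tnth_mktuple; case: i => [[|[|]]].
Qed.

Lemma comp_mpoly_id2 (p : {mpoly C[2]}) : p \mPo [tuple 'X_0; 'X_1] = p.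
Proof.
rewrite -[RHS]comp_mpoly_id; congr comp_mpoly; apply: eq_from_tnth => i.
by rewrite tnth_mktuple; case: i => [[|[|]]] // ?; congr 'X__; apply: val_inj.
Qed.

End CompMpoly.

Lemma eq_sumb (T : zmodType) (F G : Defs.basis -> T) : F =1 G -> sumb F = sumb G.
Proof. by move=> FG; rewrite /sumb !FG. Qed.

Lemma eq_of_subr_eq {V : zmodType} {x y u v : V} : u = v -> x - y = u - v -> x = y.
Proof. by move=> ->; rewrite subrr => /subr0_eq. Qed.

Section LambdaZero.
Variable C : comNzRingType.
Implicit Types (p : {mpoly C[2]}) (q : {mpoly C[3]}).
Local Notation "''Y_' i" := ('X_i : {mpoly C[3]})
  (at level 8, i at level 2, format "''Y_' i").

(* [q(0, μ, ∂)], with μ and ∂ renamed ['X_0] and ['X_1]. *)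
Definition at_lambda0 q : {mpoly C[2]} := q \mPo [tuple 0; 'X_0; 'X_1].

(* Rewriting inside a whole specialised identity makes Coq compare, and
   unfold, unrelated composites; the pieces are computed separately and
   then transported by this lemma. *)
Lemma at_lambda0_subr_eq q1 q2 q3 q4 p1 p2 p3 p4 :
  at_lambda0 q1 = p1 -> at_lambda0 q2 = p2 ->
  at_lambda0 q3 = p3 -> at_lambda0 q4 = p4 ->
  q1 - q2 = q3 - q4 -> p1 - p2 = p3 - p4.
Proof. by move=> <- <- <- <-; rewrite /at_lambda0 -!comp_mpolyB => ->. Qed.

Lemma at_lambda0_sumbM (F G : Defs.basis -> {mpoly C[3]}) :
  at_lambda0 (sumb (fun j => F j * G j))
  = sumb (fun j => at_lambda0 (F j) * at_lambda0 (G j)).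
Proof. by rewrite /at_lambda0 /sumb comp_mpolyD !rmorphM. Qed.

Lemma at_lambda0_l_mlm p :
  at_lambda0 (p \mPo [tuple 'Y_0; - 'Y_0 - 'Y_1]) = p \mPo [tuple 0; - 'X_0].
Proof.
rewrite /at_lambda0 comp_mpoly2A comp_mpolyB comp_mpolyN !comp_mpolyXU /=.
by rewrite oppr0 sub0r.
Qed.

Lemma at_lambda0_m_mlm p :
  at_lambda0 (p \mPo [tuple 'Y_1; - 'Y_0 - 'Y_1]) = p \mPo [tuple 'X_0; - 'X_0].
Proof.
rewrite /at_lambda0 comp_mpoly2A comp_mpolyB comp_mpolyN !comp_mpolyXU /=.
by rewrite oppr0 sub0r.
Qed.

Lemma at_lambda0_lm_d p : at_lambda0 (p \mPo [tuple 'Y_0 + 'Y_1; 'Y_2]) = p.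
Proof.
rewrite /at_lambda0 comp_mpoly2A comp_mpolyD !comp_mpolyXU /=.
by rewrite add0r comp_mpoly_id2.
Qed.

Lemma at_lambda0_l_d p :
  at_lambda0 (p \mPo [tuple 'Y_0; 'Y_2]) = p \mPo [tuple 0; 'X_1].
Proof. by rewrite /at_lambda0 comp_mpoly2A !comp_mpolyXU. Qed.

Lemma at_lambda0_m_d p : at_lambda0 (p \mPo [tuple 'Y_1; 'Y_2]) = p.
Proof. by rewrite /at_lambda0 comp_mpoly2A !comp_mpolyXU /= comp_mpoly_id2. Qed.

Lemma at_lambda0_m_dl p : at_lambda0 (p \mPo [tuple 'Y_1; 'Y_2 + 'Y_0]) = p.
Proof.
rewrite /at_lambda0 comp_mpoly2A comp_mpolyD !comp_mpolyXU /=.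
by rewrite addr0 comp_mpoly_id2.
Qed.

Lemma at_lambda0_l_dm p :
  at_lambda0 (p \mPo [tuple 'Y_0; 'Y_2 + 'Y_1]) = p \mPo [tuple 0; 'X_1 + 'X_0].
Proof. by rewrite /at_lambda0 comp_mpoly2A comp_mpolyD !comp_mpolyXU. Qed.

End LambdaZero.
Arguments at_lambda0 {C} q.

Section LeftSymmetryAtLambda0.
Variables (R : realType) (f : lprod R).

Lemma at_lambda0_assoc1 x y z e :
  at_lambda0 (assoc1 f x y z e)
  = sumb (fun j => (f x y j \mPo [tuple 0; - 'X_0]) * f j z e).
Proof.
rewrite /assoc1 at_lambda0_sumbM; apply: eq_sumb => j.
by congr (_ * _); [exact: at_lambda0_l_mlm | exact: at_lambda0_lm_d].
Qed.

Lemma at_lambda0_assoc2 x y z e :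
  at_lambda0 (assoc2 f x y z e)
  = sumb (fun j => f y z j * (f x j e \mPo [tuple 0; 'X_1])).
Proof.
rewrite /assoc2 at_lambda0_sumbM; apply: eq_sumb => j.
by congr (_ * _); [exact: at_lambda0_m_dl | exact: at_lambda0_l_d].
Qed.

Lemma at_lambda0_assoc1' x y z e :
  at_lambda0 (assoc1' f x y z e)
  = sumb (fun j => (f y x j \mPo [tuple 'X_0; - 'X_0]) * f j z e).
Proof.
rewrite /assoc1' at_lambda0_sumbM; apply: eq_sumb => j.
by congr (_ * _); [exact: at_lambda0_m_mlm | exact: at_lambda0_lm_d].
Qed.

Lemma at_lambda0_assoc2' x y z e :
  at_lambda0 (assoc2' f x y z e)
  = sumb (fun j => (f x z j \mPo [tuple 0; 'X_1 + 'X_0]) * f y j e).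
Proof.
rewrite /assoc2' at_lambda0_sumbM; apply: eq_sumb => j.
by congr (_ * _); [exact: at_lambda0_l_dm | exact: at_lambda0_m_d].
Qed.

Lemma left_symmetric_at_lambda0 : left_symmetric f -> forall x y z e,
  sumb (fun j => (f x y j \mPo [tuple 0; - 'X_0]) * f j z e)
  - sumb (fun j => f y z j * (f x j e \mPo [tuple 0; 'X_1]))
  = sumb (fun j => (f y x j \mPo [tuple 'X_0; - 'X_0]) * f j z e)
  - sumb (fun j => (f x z j \mPo [tuple 0; 'X_1 + 'X_0]) * f y j e).
Proof.
move=> lsym x y z e.
exact: at_lambda0_subr_eq (at_lambda0_assoc1 x y z e) (at_lambda0_assoc2 x y z e)
  (at_lambda0_assoc1' x y z e) (at_lambda0_assoc2' x y z e) (lsym x y z e).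
Qed.

End LeftSymmetryAtLambda0.
Arguments left_symmetric_at_lambda0 {R f}.

Section IdomainMpoly.
Variable C : idomainType.

Lemma mul_mpolyC_eq0 n (u : C) (p : {mpoly C[n]}) :
  u != 0 -> (u%:MP * p == 0) = (p == 0).
Proof. by move=> u_neq0; rewrite mulf_eq0 mpolyC_eq0 (negbTE u_neq0). Qed.

Lemma comp_mpoly_axis_eq0 (c : C) (q : {mpoly C[2]}) :
  - ('X_1 + 'X_0 + c%:MP) * (q \mPo [tuple (0 : {mpoly C[2]}); 'X_1 + 'X_0])
    = - (c%:MP - 'X_0) * (q \mPo [tuple 0; - 'X_0]) ->
  forall k (t : {mpoly C[k]}), q \mPo [tuple 0; t] = 0.
Proof.
have X1c_neq0 : 'X_1 + c%:MP != 0 :> {mpoly C[2]}.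
  apply/eqP => /(congr1 (meval (fun=> 1 - c))).
  by rewrite mevalD mevalXU mevalC meval0 subrK; apply/eqP; exact: oner_neq0.
(* Substitute (λ, ∂) := (c, ∂ - c): the right-hand side vanishes. *)
move=> /(congr1 (comp_mpoly [tuple (c%:MP : {mpoly C[2]}); 'X_1 - c%:MP])).
rewrite !rmorphM /= !comp_mpoly2A.
rewrite !(comp_mpolyD, comp_mpolyB, comp_mpolyN, comp_mpolyC, comp_mpolyXU) /=.
rewrite !subrK subrr oppr0 mul0r mpolyC0 => /eqP.
rewrite mulf_eq0 oppr_eq0 (negbTE X1c_neq0) /= => /eqP q0 k t.
transitivity ((q \mPo [tuple 0; 'X_1]) \mPo [tuple (0 : {mpoly C[k]}); t]).
  by rewrite comp_mpoly2A comp_mpoly0 comp_mpolyXU.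
by rewrite q0 comp_mpoly0.
Qed.

End IdomainMpoly.
Arguments mul_mpolyC_eq0 {C n u} p.

Section CompatibleStructure.
Context {R : realType} {a b c : Cplx R} {f : lprod R}.
Local Notation ell := ('X_1 + 'X_0 + c%:MP : P2 R).
Local Notation g1 := (f bL bW bL).
Local Notation h1 := (f bW bL bL).
Local Notation k1 := (f bW bW bL).
Local Notation k2 := (f bW bW bW).

Hypotheses (lsym : left_symmetric f) (compat : compatible (Wab a b) f).
Hypotheses (fLLL : f bL bL bL = ell) (fLLW : f bL bL bW = 0).
Hypotheses (g2E : f bL bW bW = 'X_1 + (a - 1) *: 'X_0 + (b + c)%:MP).
Hypotheses (h2E : f bW bL bW = ell).

Lemma g1_flip : g1 = flip h1.
Proof. by apply/eqP; rewrite -subr_eq0 compat. Qed.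

Lemma k2_flip : flip k2 = k2.
Proof. by apply/esym/eqP; rewrite -subr_eq0 compat. Qed.

Lemma g1_at0 : g1 \mPo [tuple 0; - 'X_0] = h1 \mPo [tuple 'X_0; - 'X_0] :> P2 R.
Proof.
rewrite g1_flip /flip comp_mpoly2A !(comp_mpolyB, comp_mpolyN, comp_mpolyXU) /=.
by rewrite oppr0 sub0r opprK.
Qed.

(* The composites are abstracted before calling [ring], which would otherwise
   try to unfold them when comparing atoms. *)
Lemma h1_eq : b%:MP * h1 = ell * (g1 \mPo [tuple 0; 'X_1]).
Proof.
have := left_symmetric_at_lambda0 lsym bL bW bL bL.
rewrite /sumb g1_at0 fLLL fLLW g2E h2E.
rewrite !(comp_mpolyD, comp_mpolyZ, comp_mpolyC, comp_mpolyXU, comp_mpoly0) /=.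
move: (h1 \mPo _) (g1 \mPo _) => h1' g1' E.
by apply: (eq_of_subr_eq E); ring.
Qed.

Lemma k2_eq : b%:MP * k2 = - ell * (g1 \mPo [tuple 0; 'X_1 + 'X_0]).
Proof.
have := left_symmetric_at_lambda0 lsym bL bW bW bW.
rewrite /sumb g1_at0 fLLW g2E h2E.
rewrite !(comp_mpolyD, comp_mpolyZ, comp_mpolyC, comp_mpolyXU, comp_mpoly0) /=.
move: (h1 \mPo _) (g1 \mPo [tuple 0; 'X_1 + 'X_0]) => h1' g1' E.
by apply: (eq_of_subr_eq E); ring.
Qed.

Lemma k1_eq : (b *+ 2)%:MP * k1
  = k2 * (g1 \mPo [tuple 0; 'X_1]) - (g1 \mPo [tuple 0; 'X_1 + 'X_0]) * h1.
Proof.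
have := left_symmetric_at_lambda0 lsym bL bW bW bL.
rewrite /sumb g1_at0 fLLL g2E h2E.
rewrite !(comp_mpolyD, comp_mpolyZ, comp_mpolyC, comp_mpolyXU, comp_mpoly0) /=.
move: (h1 \mPo _) (g1 \mPo [tuple 0; 'X_1]) (g1 \mPo [tuple 0; 'X_1 + 'X_0]).
move=> h1' g1' g1'' E.
by apply: (eq_of_subr_eq E); ring.
Qed.

Lemma k2_eq_flip : b%:MP * k2 = - (c%:MP - 'X_0) * (g1 \mPo [tuple 0; - 'X_0]).
Proof.
have := congr1 (@flip R) k2_eq.
rewrite /flip !rmorphM /= comp_mpolyC -/(flip k2) k2_flip => ->.
rewrite comp_mpoly2A comp_mpolyN comp_mpoly0 !comp_mpolyD comp_mpolyC.
rewrite !comp_mpolyXU /= addrCA subrr addr0.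
by congr (- _ * _); ring.
Qed.

Lemma g1_axis_eq0 k (t : {mpoly (Cplx R)[k]}) : g1 \mPo [tuple 0; t] = 0.
Proof.
by apply: comp_mpoly_axis_eq0; exact: etrans (esym k2_eq) k2_eq_flip.
Qed.

End CompatibleStructure.

Theorem lemma3p5 (R : realType) (a b c : Cplx R) (f : lprod R) :
  b != 0 ->
  left_symmetric f ->
  compatible (Wab a b) f ->
  (* C[partial]L is a subalgebra with L_lambda L = (partial + lambda + c) L *)
  f bL bL bL = 'X_1 + 'X_0 + c%:MP ->
  f bL bL bW = 0 ->
  (* g_2 = partial + (a-1) lambda + b + c *)
  f bL bW bW = 'X_1 + (a - 1) *: 'X_0 + (b + c)%:MP ->
  (* h_2 = partial + lambda + c *)
  f bW bL bW = 'X_1 + 'X_0 + c%:MP ->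
  (* h_1 = g_1 = k_1 = k_2 = 0 *)
  [/\ f bW bL bL = 0, f bL bW bL = 0, f bW bW bL = 0 & f bW bW bW = 0].
Proof.
move=> b_neq0 lsym compat fLLL fLLW g2E h2E.
have g1_axis := g1_axis_eq0 lsym compat fLLW g2E h2E.
have h1_0 : f bW bL bL = 0.
  apply/eqP; rewrite -(mul_mpolyC_eq0 _ b_neq0).
  by rewrite (h1_eq lsym compat fLLL fLLW g2E h2E) g1_axis mulr0.
have k2_0 : f bW bW bW = 0.
  apply/eqP; rewrite -(mul_mpolyC_eq0 _ b_neq0).
  by rewrite (k2_eq lsym compat fLLW g2E h2E) g1_axis mulr0.
have g1_0 : f bL bW bL = 0 by rewrite (g1_flip compat) h1_0 /flip comp_mpoly0.
have b2_neq0 : b *+ 2 != 0 by rewrite Num.Theory.mulrn_eq0 negb_or b_neq0.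
split=> //; apply/eqP; rewrite -(mul_mpolyC_eq0 _ b2_neq0).
by rewrite (k1_eq lsym compat fLLL g2E h2E) k2_0 h1_0 !mul0r mulr0 subr0.
Qed.
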